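(* Let $G$ be a primitive permutation group on a finite set $\Omega$ with $n=|\Omega|>2$. Then: (a) $G$ synchronizes every map $f:\Omega\to\Omega$ of rank $n-2$; (b) $G$ synchronizes every idempotent map $f:\Omega\to\Omega$ with kernel type $(3,2,1,1,\ldots,1)$; (c) $G$ synchronizes every map $f:\Omega\to\Omega$ with kernel type $(3,2,1,1,\ldots,1)$ for which there exists $g\in G$ such that $\mathrm{rank}(fgf)=\mathrm{rank}(f)$.
   Context: Maps act on $\Omega$, and $fgf$ denotes the composite ''apply $f$, then $g$, then $f$''. The rank of $f$ is $|\Omega f|$, the size of its image. $G$ synchronizes a non-invertible map $f$ if the semigroup $\langle G,f\rangle$ contains a constant map. The kernel of $f$ is the partition of $\Omega$ into the inverse images of points of the image of $f$; the kernel type is the multiset of sizes of the kernel classes (so $(3,2,1,\ldots,1)$ means one class of size 3, one of size 2, all others singletons). A map $f$ is idempotent if $f\circ f=f$. *)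

From mathcomp Require Import all_boot all_fingroup all_solvable.
Set Implicit Arguments. Unset Strict Implicit. Unset Printing Implicit Defensive.

(* Maps act on Omega = T; composition "apply h1 then h2" is (h2 \o h1). *)

Inductive in_semigroup (T : finType) (G : {set {perm T}}) (f : T -> T)
  : (T -> T) -> Prop :=
| sg_perm (g : {perm T}) : g \in G -> in_semigroup G f (fun x => g x)
| sg_map : in_semigroup G f f
| sg_comp h1 h2 : in_semigroup G f h1 -> in_semigroup G f h2 ->
                  in_semigroup G f (h2 \o h1).

Definition is_constant_map (T : finType) (h : T -> T) : Prop :=
  exists c : T, forall x, h x = c.

Definition synchronizes (T : finType) (G : {set {perm T}}) (f : T -> T) : Prop :=
  exists h, in_semigroup G f h /\ is_constant_map h.

Definition map_rank (T : finType) (f : T -> T) : nat := #|[set f x | x : T]|.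

Definition kernel_type (T : finType) (f : T -> T) : seq nat :=
  [seq #|[set x | f x == y]| | y <- enum [set f x | x : T]].

Definition kernel_type_321 (T : finType) (f : T -> T) : Prop :=
  perm_eq (kernel_type f) [:: 3, 2 & nseq (#|T| - 5) 1].

Definition idempotent_map (T : finType) (f : T -> T) : Prop :=
  forall x, f (f x) = f x.

From mathcomp Require Import all_boot all_fingroup all_solvable.
From mathcomp Require Import boolp zify.

Set Implicit Arguments. Unset Strict Implicit. Unset Printing Implicit Defensive.

(* All three parts only need rank(f) >= n - 3, and the proof gives that bound.
   Suppose G does not synchronize f and let m be the least rank in <G, f>.
   For maps h, h' of rank m, h is injective on the image of h', so every
   kernel class of a rank-m map meets every image of a rank-m map in exactly
   one point.  Both families are closed under preimages by G, so by
   primitivity no two distinct points are inseparable in either of them: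
   otherwise a nontrivial G-invariant preorder would be total, making a
   rank-m map constant or surjective.
   Preimage under f maps kernel classes to kernel classes.  If it were
   injective it would be onto, and no class would separate two points that f
   identifies.  So two distinct classes B, B' have the same preimage and
   differ only outside the image of f.  Neither B \ B' nor B' \ B is a
   singleton {x}, for then every rank-m image through a point of the other
   difference would contain x; hence f misses at least four points. *)

Section InvariantRelations.

Variables (T : finType) (G : {group {perm T}}).

Lemma invariant_preorder_perm_sym (R : T -> T -> Prop) g x :
  (forall x, R x x) -> (forall x y z, R x y -> R y z -> R x z) ->
  (forall g x y, g \in G -> R x y -> R (g x) (g y)) ->
  g \in G -> R (g x) x -> R x (g x).
Proof.
move=> Rxx Rtr Rinv Gg Rgx.
have Rpow i : R ((g ^+ i.+1)%g x) (g x).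
  elim: i => [|i IHi]; first by rewrite expg1.
  apply: Rtr IHi; rewrite expgS permM; exact: Rinv (groupX _ Gg) Rgx.
by have := Rpow #[g]%g.-1; rewrite prednK ?order_gt0 // expg_order perm1.
Qed.

Hypothesis primG : [primitive G, on [set: T] | 'P].

Lemma primitive_equivalence_total (e : rel T) :
  equivalence_rel e -> (forall g x y, g \in G -> e x y -> e (g x) (g y)) ->
  forall x y, x != y -> e x y -> forall a b, e a b.
Proof.
move=> eq_e einv x y neq_xy exy a b; apply: contrapT => not_eab.
(* The classes of e would form a block system with blocks cl a <> cl b and
   fewer than |T| blocks since cl x = cl y. *)
pose cl u := [set v in [set: T] | e u v].
have clE u v : (cl u == cl v) = e u v.
  apply/eqP/idP => [/setP/(_ v)|euv]; first by rewrite !inE /= (eq_e v v v).1 => ->.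
  by apply/setP => w; rewrite !inE (eq_e u v w).
have clJ h u : h \in G -> ('P^*)%act (cl u) h = cl (h u).
  move=> Gh; apply/setP => v; rewrite !inE /=.
  apply/imsetP/idP => [[w]|ehv].
    by rewrite !inE /= => euw ->; exact: einv.
  exists ((h^-1)%g v); last by rewrite /= apermE permKV.
  by rewrite !inE /= -[u](permK h); apply: einv; rewrite ?groupV.
pose Q := equivalence_partition e [set: T].
have Qcl u : cl u \in Q by apply: imset_f.
have QJ h X : h \in G -> X \in Q -> ('P^*)%act X h \in Q.
  by move=> Gh /imsetP[u _ ->]; rewrite clJ.
case/andP: primG => _ /negP; apply; apply/existsP; exists Q; apply/and3P; split.
- by apply: equivalence_partitionP => u v w _ _ _; apply: eq_e.
- apply/actsP => h Gh X /=; apply/idP/idP; last exact: QJ.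
  by move/(QJ _ _ (groupVr Gh)); rewrite -actM mulgV act1.
apply/andP; split.
  apply/card_gt1P; exists (cl a), (cl b); split; rewrite ?Qcl //.
  by rewrite clE; apply/negP.
rewrite ltn_neqAle leq_imset_card andbT; apply: contra neq_xy => /imset_injP inj.
by apply/eqP/inj; rewrite ?inE //; apply/eqP; rewrite clE.
Qed.

Lemma primitive_preorder_total (R : T -> T -> Prop) :
  (forall x, R x x) -> (forall x y z, R x y -> R y z -> R x z) ->
  (forall g x y, g \in G -> R x y -> R (g x) (g y)) ->
  forall x y, x != y -> R x y -> forall a b, R a b.
Proof.
move=> Rxx Rtr Rinv x y neq_xy Rxy a b.
have [g Gg] := atransP2 (proj1 (andP primG)) (in_setT y) (in_setT x).
rewrite /= apermE => def_x.
have Ryx : R y x.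
  by rewrite def_x; apply: (invariant_preorder_perm_sym Rxx Rtr Rinv Gg); rewrite -def_x.
pose e u v := `[< R u v /\ R v u >].
have eP u v : reflect (R u v /\ R v u) (e u v) by apply: asboolP.
have eq_e : equivalence_rel e.
  move=> u v w; split; first by apply/eP.
  by move/eP=> [Ruv Rvu]; apply/eP/eP => -[Rw1 Rw2]; split; eauto.
have e_inv g' u v : g' \in G -> e u v -> e (g' u) (g' v).
  by move=> Gg' /eP[Ruv Rvu]; apply/eP; split; apply: Rinv.
have exy : e x y by apply/eP.
by have /eP[] := primitive_equivalence_total eq_e e_inv neq_xy exy a b.
Qed.

Lemma primitive_invariant_family (F : {set T} -> Prop) :
  (forall X g, F X -> g \in G -> F [set z | g z \in X]) ->
  forall x y, x != y -> (forall X, F X -> x \in X -> y \in X) ->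
  forall X a, F X -> a \in X -> X = setT.
Proof.
move=> Fpre x y neq_xy Fxy X a FX Xa; apply/setP => b; rewrite inE.
pose R u v := forall X, F X -> u \in X -> v \in X.
apply: (@primitive_preorder_total R _ _ _ x y neq_xy Fxy a b X FX Xa).
- by move=> u Y _.
- by move=> u v w Ruv Rvw Y FY uY; apply: Rvw (Ruv Y FY uY).
by move=> g u v Gg Ruv Y FY guY; have := Ruv _ (Fpre Y g FY Gg); rewrite !inE; apply.
Qed.

End InvariantRelations.

Definition map_image (T : finType) (h : T -> T) : {set T} := [set h x | x : T].

Section MinimalRank.

Variables (T : finType) (G : {group {perm T}}) (f : T -> T).
Local Notation S := (in_semigroup G f).

Lemma map_rankE (h : T -> T) : map_rank h = #|map_image h|.
Proof. by []. Qed.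

Lemma map_image_comp (h k : T -> T) : map_image (k \o h) = k @: map_image h.
Proof.
apply/setP => y; apply/imsetP/imsetP => [[x _ ->]|[_ /imsetP[x _ ->] ->]].
  by exists (h x); rewrite ?imset_f.
by exists x.
Qed.

Lemma map_image_compS (h k : T -> T) : map_image (k \o h) \subset map_image k.
Proof. by apply/subsetP => _ /imsetP[x _ ->]; apply: imset_f. Qed.

Lemma map_rank_compl (h k : T -> T) : map_rank (k \o h) <= map_rank h.
Proof. by rewrite !map_rankE map_image_comp leq_imset_card. Qed.

Lemma map_rank_compr (h k : T -> T) : map_rank (k \o h) <= map_rank k.
Proof. exact: subset_leq_card (map_image_compS h k). Qed.

Definition min_rank h := S h /\ forall h', S h' -> map_rank h <= map_rank h'.

Lemma exists_min_rank : exists h, min_rank h.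
Proof.
have rank_attained : exists n, `[< exists2 h, S h & map_rank h = n >].
  by exists (map_rank f); apply/asboolP; exists f => //; apply: sg_map.
case: (ex_minnP rank_attained) => m /asboolP[h Sh <-] minh.
by exists h; split=> // h' Sh'; apply: minh; apply/asboolP; exists h'.
Qed.

Lemma min_rank_postcomp h s : min_rank h -> S s -> min_rank (s \o h).
Proof.
move=> [Sh minh] Ss; split=> [|h' Sh']; first exact: sg_comp.
exact: leq_trans (map_rank_compl h s) (minh h' Sh').
Qed.

Lemma min_rank_precomp h s : min_rank h -> S s -> min_rank (h \o s).
Proof.
move=> [Sh minh] Ss; split=> [|h' Sh']; first exact: sg_comp.
exact: leq_trans (map_rank_compr s h) (minh h' Sh').
Qed.

Lemma map_image_min_precomp h s :
  min_rank h -> S s -> map_image (h \o s) = map_image h.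
Proof.
move=> [Sh minh] Ss; apply/eqP; rewrite eqEcard map_image_compS.
exact: minh _ (sg_comp Ss Sh).
Qed.

Lemma min_rank_inj_image h h' :
  min_rank h -> min_rank h' -> {in map_image h' &, injective h}.
Proof.
move=> [Sh _] [Sh' minh']; apply/imset_injP.
by rewrite eqn_leq leq_imset_card -map_image_comp; apply: minh' (sg_comp Sh' Sh).
Qed.

Definition kernel_class B := exists h x, min_rank h /\ B = [set z | h z == h x].

Definition min_image J := exists2 h, min_rank h & J = map_image h.

Lemma kernel_class_meets_min_image B J :
  kernel_class B -> min_image J -> exists2 z, z \in J & z \in B.
Proof.
move=> [h [x [minh ->]]] [h' [Sh' _] ->].
have : h x \in map_image (h \o h') by rewrite map_image_min_precomp ?imset_f.
by case/imsetP => v _ /= hh'v; exists (h' v); rewrite ?imset_f // inE hh'v.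
Qed.

Lemma kernel_class_min_image_uniq B J z1 z2 :
  kernel_class B -> min_image J ->
  z1 \in J -> z1 \in B -> z2 \in J -> z2 \in B -> z1 = z2.
Proof.
move=> [h [x [minh ->]]] [h' minh' ->] Jz1; rewrite inE => /eqP hz1 Jz2.
by rewrite inE => /eqP hz2; apply: (min_rank_inj_image minh minh'); rewrite ?hz1.
Qed.

Lemma kernel_class_preimage B s :
  kernel_class B -> S s -> kernel_class [set z | s z \in B].
Proof.
move=> [h [x [minh ->]]] Ss.
have : h x \in map_image (h \o s) by rewrite map_image_min_precomp ?imset_f.
case/imsetP => v _ /= hsv; exists (h \o s), v; split; first exact: min_rank_precomp.
by apply/setP => z; rewrite !inE /= hsv.
Qed.

Lemma min_image_preimage J g :
  min_image J -> g \in G -> min_image [set z | g z \in J].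
Proof.
move=> [h minh ->] Gg; exists ((fun z => (g^-1)%g z) \o h).
  by apply: min_rank_postcomp => //; apply: sg_perm; rewrite groupV.
apply/setP => z; rewrite inE; apply/imsetP/imsetP => [[v _ gz]|[v _ ->]].
  by exists v; rewrite //= -gz permK.
by exists v; rewrite //= permKV.
Qed.

Hypothesis primG : [primitive G, on [set: T] | 'P].
Hypothesis not_sync : ~ synchronizes G f.
Hypothesis f_rank_lt : map_rank f < #|T|.

Lemma min_image_cover x : exists2 J, min_image J & x \in J.
Proof.
have [h minh] := exists_min_rank.
have [g Gg] := atransP2 (proj1 (andP primG)) (in_setT (h x)) (in_setT x).
rewrite /= apermE => def_x; exists (map_image ((fun z => g z) \o h)).
  by exists ((fun z => g z) \o h) => //; apply: min_rank_postcomp => //; apply: sg_perm.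
by rewrite def_x (imset_f (fun z => g (h z))).
Qed.

Lemma kernel_classes_separate x y :
  x != y -> ~ (forall B, kernel_class B -> x \in B -> y \in B).
Proof.
move=> neq_xy Bxy; have [h minh] := exists_min_rank.
have Bpre B g : kernel_class B -> g \in G -> kernel_class [set z | g z \in B].
  by move=> cB Gg; apply: (kernel_class_preimage cB (sg_perm f Gg)).
have hx_full := primitive_invariant_family primG Bpre neq_xy Bxy.
apply: not_sync; exists h; split; first by case: minh.
have hx_class : kernel_class [set z | h z == h x] by exists h, x.
exists (h x) => z; apply/eqP.
have /setP/(_ z) : [set z | h z == h x] = setT by apply: hx_full hx_class _; rewrite inE.
by rewrite !inE.
Qed.

Lemma min_images_separate x y :
  x != y -> ~ (forall J, min_image J -> x \in J -> y \in J).
Proof.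
move=> neq_xy Jxy; have [h [Sh minh]] := exists_min_rank.
have := primitive_invariant_family primG min_image_preimage neq_xy Jxy.
move=> /(_ (map_image h) (h x)); rewrite imset_f // => /(_ _ isT) h_full.
have : map_rank h <= map_rank f by apply: minh; apply: sg_map.
rewrite map_rankE h_full ?cardsT; first by rewrite leqNgt f_rank_lt.
by exists h.
Qed.

Lemma kernel_class_setD_nonempty B B' x :
  kernel_class B -> kernel_class B' -> x \in B :\: B' -> exists y, y \in B' :\: B.
Proof.
move=> cB cB' /setDP[Bx B'x]; have [J imJ Jx] := min_image_cover x.
have [y Jy B'y] := kernel_class_meets_min_image cB' imJ.
exists y; rewrite inE B'y andbT; apply: contra B'x => By.
by rewrite (kernel_class_min_image_uniq cB imJ Jx Bx Jy By).
Qed.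

Lemma kernel_class_setD_gt1 B B' :
  kernel_class B -> kernel_class B' -> B != B' -> 1 < #|B :\: B'|.
Proof.
move=> cB cB' neqBB'.
have [x BB'x] : exists x, x \in B :\: B'.
  move: neqBB'; rewrite eqEsubset negb_and.
  case/orP => /subsetPn[z Bz B'z]; first by exists z; rewrite inE Bz B'z.
  by apply: kernel_class_setD_nonempty cB' cB (_ : z \in B' :\: B); rewrite inE Bz B'z.
have [y /setDP[B'y By]] := kernel_class_setD_nonempty cB cB' BB'x.
have /setDP[Bx B'x] := BB'x.
rewrite ltnNge; apply/negP => le1.
apply: (min_images_separate (x := y) (y := x)); first by apply: contraNneq By => ->.
move=> J imJ Jy; have [w Jw Bw] := kernel_class_meets_min_image cB imJ.
have B'w : w \notin B'.
  apply: contra By => B'w.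
  by rewrite -(kernel_class_min_image_uniq cB' imJ Jw B'w Jy B'y).
by rewrite (card_le1_eqP le1 w x) // inE Bw B'w.
Qed.

Lemma kernel_classes_same_preimage :
  exists B B', [/\ kernel_class B, kernel_class B', B != B' &
                   [set z | f z \in B] = [set z | f z \in B']].
Proof.
have [x0 _ [y0 /andP[neq_yx0 _] fxy0]] : exists2 x0, x0 \in T &
    exists2 y0, y0 \in [predD1 T & x0] & f x0 = f y0.
  apply/dinjectivePn; apply: contraL f_rank_lt => /dinjectiveP f_inj.
  by rewrite -leqNgt /map_rank card_in_imset.
pose classes := [set B : {set T} | `[< kernel_class B >]].
pose preim (B : {set T}) := [set z | f z \in B].
case: (boolP (dinjectiveb preim classes)) => [/dinjectiveP preim_inj|].
  have preim_onto : preim @: classes = classes.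
    apply/eqP; rewrite eqEcard card_in_imset // leqnn andbT.
    apply/subsetP => _ /imsetP[B /[!inE] /asboolP cB ->]; apply/asboolP.
    exact: kernel_class_preimage cB (sg_map G f).
  case: (kernel_classes_separate (x := x0) (y := y0)); first by rewrite eq_sym.
  move=> B cB x0B; have : B \in preim @: classes by rewrite preim_onto inE; apply/asboolP.
  by case/imsetP => B' _ defB; move: x0B; rewrite defB !inE fxy0.
case/dinjectivePn => B /[!inE] /asboolP cB [B' /andP[neqB'B /[!inE] /asboolP cB'] eq_pre].
by exists B, B'; split; rewrite // eq_sym.
Qed.

Lemma rank_defect_gt3 : map_rank f + 3 < #|T|.
Proof.
have [B [B' [cB cB' neqBB' eq_pre]]] := kernel_classes_same_preimage.
have outside_image : (B :\: B') :|: (B' :\: B) \subset ~: map_image f.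
  apply/subsetP => z; rewrite !inE; apply: contraTN => /imsetP[v _ ->].
  have /setP/(_ v) := eq_pre; rewrite !inE => ->.
  by case: (f v \in B').
have disjoint_diffs : (B :\: B') :&: (B' :\: B) = set0.
  by apply/setP => z; rewrite !inE; case: (z \in B); case: (z \in B').
have := subset_leq_card outside_image.
have := cardsUI (B :\: B') (B' :\: B); rewrite disjoint_diffs cards0 addn0.
have := cardsC (map_image f).
have := kernel_class_setD_gt1 cB cB' neqBB'.
have := kernel_class_setD_gt1 cB' cB; rewrite eq_sym => /(_ neqBB').
by rewrite map_rankE; lia.
Qed.

End MinimalRank.

Theorem primitive_synchronizes_rank_ge (T : finType) (G : {group {perm T}}) f :
  [primitive G, on [set: T] | 'P] -> map_rank f < #|T| -> #|T| <= map_rank f + 3 ->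
  synchronizes G f.
Proof.
move=> primG rank_lt small_defect; apply: contrapT => not_sync.
by move: small_defect; rewrite leqNgt (rank_defect_gt3 primG not_sync rank_lt).
Qed.

Lemma map_rank_kernel_type_321 (T : finType) (f : T -> T) :
  kernel_type_321 f -> map_rank f = (#|T| - 5).+2.
Proof. by move/perm_size; rewrite size_map -cardE /= size_nseq. Qed.

Theorem theorem3 (T : finType) (G : {group {perm T}}) :
  [primitive G, on [set: T] | 'P] -> 2 < #|T| ->
  (forall f : T -> T, map_rank f = #|T| - 2 -> synchronizes G f) /\
  (forall f : T -> T, idempotent_map f -> kernel_type_321 f ->
     synchronizes G f) /\
  (forall f : T -> T, kernel_type_321 f ->
     (exists2 g : {perm T}, g \in G & map_rank (f \o g \o f) = map_rank f) ->
     synchronizes G f).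
Proof.
move=> primG n_gt2; split; [|split].
- by move=> f rank_f; apply: primitive_synchronizes_rank_ge => //; rewrite rank_f; lia.
- move=> f _ /map_rank_kernel_type_321 rank_f.
  by apply: primitive_synchronizes_rank_ge => //; rewrite rank_f; lia.
move=> f /map_rank_kernel_type_321 rank_f _.
by apply: primitive_synchronizes_rank_ge => //; rewrite rank_f; lia.
Qed.
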